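(* Let $n=2$, let $\mathcal{D}$ be the set of strictly positive piecewise-constant functions $[0,1]\to\mathbb{R}_{>0}$, and let $\mathcal{M}$ be a truthful proportional mechanism on $\mathcal{D}\times\mathcal{D}$. Let $X_1=\mathcal{M}_1(F^1)$, $X_2=\mathcal{M}_2(F^1)$ where $F^1$ is the profile of two constant-$1$ densities (assume $X_1,X_2$ are finite unions of intervals). Fix $\varepsilon\in(0,\frac12)$ and let $F^3=(f_1^3,f_2^3)$ where $f_1^3=\frac12$ on $X_1$ and $1$ on $X_2$, and $f_2^3=\varepsilon$ on $X_1$ and $1$ on $X_2$. Then $$|\mathcal{M}_1(F^3)\cap X_1|=|\mathcal{M}_1(F^3)\cap X_2|=|\mathcal{M}_2(F^3)\cap X_1|=|\mathcal{M}_2(F^3)\cap X_2|=\tfrac14.$$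
   Context: Agent $i$'s utility for a measurable $X\subseteq[0,1]$ is $v_i(X)=\int_X f_i$; $|X|$ denotes Lebesgue measure. An allocation is a pair of disjoint measurable subsets of $[0,1]$ (not necessarily covering $[0,1]$); $\mathcal{M}_i(F)$ is agent $i$'s piece. Proportional: $v_i(\mathcal{M}_i(F))\ge\frac12 v_i([0,1])$ for each $i$ w.r.t. the reported densities. Truthful: for each agent $i$, any profile and any alternative report $f_i'$ in the domain, agent $i$'s utility (w.r.t. the true $f_i$) from the truthful report is at least that from reporting $f_i'$, the other agent's report held fixed. *)

From HB Require Import structures.
From mathcomp Require Import all_boot all_order all_algebra.
From mathcomp Require Import all_classical all_reals all_analysis.
Set Implicit Arguments. Unset Strict Implicit. Unset Printing Implicit Defensive.
Import Order.TTheory GRing.Theory Num.Theory.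
Import numFieldNormedType.Exports.
Local Open Scope classical_set_scope.
Local Open Scope ring_scope.

Section Defs.
Variable R : realType.

Definition unit01 : set R := [set x | 0 <= x <= 1].

Definition piecewise_const_pos (f : R -> R) : Prop :=
  (forall x, ~ unit01 x -> f x = 0) /\
  (forall x, unit01 x -> 0 < f x) /\
  exists s : seq R, forall x y, unit01 x -> unit01 y ->
     (forall b, b \in s -> ~ (Num.min x y <= b <= Num.max x y)) -> f x = f y.

Definition dens1 (x : R) : R := if (0 <= x <= 1) then 1 else 0.

Definition util (f : R -> R) (X : set R) : \bar R :=
  (\int[@lebesgue_measure R]_(x in X) (f x)%:E)%E.

Definition allocation (A : set R * set R) : Prop :=
  measurable A.1 /\ measurable A.2 /\ A.1 `<=` unit01 /\ A.2 `<=` unit01 /\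
  A.1 `&` A.2 = set0.

Definition mechanism (M : (R -> R) -> (R -> R) -> set R * set R) : Prop :=
  forall f1 f2, piecewise_const_pos f1 -> piecewise_const_pos f2 ->
    allocation (M f1 f2).

Definition proportional (M : (R -> R) -> (R -> R) -> set R * set R) : Prop :=
  forall f1 f2, piecewise_const_pos f1 -> piecewise_const_pos f2 ->
    ((2^-1)%:E * util f1 unit01 <= util f1 (M f1 f2).1)%E /\
    ((2^-1)%:E * util f2 unit01 <= util f2 (M f1 f2).2)%E.

Definition truthful (M : (R -> R) -> (R -> R) -> set R * set R) : Prop :=
  (forall f1 f2 f1', piecewise_const_pos f1 -> piecewise_const_pos f2 ->
     piecewise_const_pos f1' ->
     (util f1 (M f1' f2).1 <= util f1 (M f1 f2).1)%E) /\
  (forall f1 f2 f2', piecewise_const_pos f1 -> piecewise_const_pos f2 ->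
     piecewise_const_pos f2' ->
     (util f2 (M f1 f2').2 <= util f2 (M f1 f2).2)%E).

Definition fin_union_intervals (X : set R) : Prop :=
  exists s : seq (interval R), X = \big[setU/set0]_(i <- s) [set` i].

End Defs.

From HB Require Import structures.
From mathcomp Require Import all_boot all_order all_algebra.
From mathcomp Require Import all_classical all_reals all_analysis.
From mathcomp Require Import lra measurable_realfun.
Set Implicit Arguments. Unset Strict Implicit. Unset Printing Implicit Defensive.
Import Order.TTheory GRing.Theory Num.Theory.
Import numFieldNormedType.Exports.
Local Open Scope classical_set_scope.
Local Open Scope ring_scope.
(* Proportionality on the uniform profile forces |X1| = |X2| = 1/2,
   so X1 and X2 cover [0,1] up to a null set, and a density that is constant
   on X1 and on X2 gives a set A the utility k1 |A & X1| + k2 |A & X2|.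

   The argument then has two mechanism-specific steps: truthfulness bounds
   agent 1's piece of F^3 by one half (compare with agent 1 reporting the
   uniform density), and proportionality at F^3 yields two linear
   inequalities in the four lengths a, b, c, d.  Together with the obvious
   packing constraints these force a = b = c = d = 1/4 (lemma
   [quarter_shares]). *)
Section PiecewiseConstant.
Variable R : realType.

Lemma dist_seq_gt0 (s : seq R) (x : R) : x \notin s ->
  exists2 d : R, 0 < d & forall b, b \in s -> d <= `|x - b|.
Proof.
elim: s => [|b s IH]; first by move=> _; exists 1 => // b; rewrite in_nil.
rewrite in_cons negb_or => /andP[xb /IH[d d0 Hd]].
exists (Num.min d `|x - b|); first by rewrite lt_min d0 normr_gt0 subr_eq0.
move=> c; rewrite in_cons => /orP[/eqP->|cs]; first by rewrite ge_min lexx orbT.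
by rewrite ge_min Hd.
Qed.

Lemma between_dist_le (x y b : R) :
  Num.min x y <= b <= Num.max x y -> `|x - b| <= `|x - y|.
Proof.
case: (lerP x y) => [xy /andP[xb by_]|/ltW yx /andP[yb bx]].
  by rewrite !(distrC x) !ger0_norm ?subr_ge0 // lerD2r.
by rewrite !ger0_norm ?subr_ge0 // lerD2l lerN2.
Qed.

Lemma nbhs_no_breakpoint (s : seq R) (x : R) : x \notin s ->
  exists2 d : R, 0 < d & forall y b, `|x - y| < d -> b \in s ->
    ~ (Num.min x y <= b <= Num.max x y).
Proof.
move=> /dist_seq_gt0[d d0 Hd]; exists d => // y b xy bs /between_dist_le xb.
by have := lt_le_trans (le_lt_trans xb xy) (Hd b bs); rewrite ltxx.
Qed.

Variable f : R -> R.
Variable s : seq R.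
Hypothesis f_const : forall x y, unit01 x -> unit01 y ->
  (forall b, b \in s -> ~ (Num.min x y <= b <= Num.max x y)) -> f x = f y.

Let breaks : seq R := 0 :: 1 :: s.

Lemma pc_locally_constant (x : R) : unit01 x -> x \notin breaks ->
  exists2 d : R, 0 < d & forall y, `|x - y| < d ->
    [/\ unit01 y, y \notin breaks & f y = f x].
Proof.
move=> /andP[x0 x1] xb; have [d d0 Hd] := nbhs_no_breakpoint xb.
exists d => // y xy; have nb := Hd y _ xy.
have y01 : unit01 y.
  apply/andP; split.
    rewrite leNgt; apply/negP => y0; apply: (nb 0); first by rewrite in_cons eqxx.
    have y_le_x : y <= x by lra.
    by rewrite (min_r y_le_x) (max_l y_le_x) (ltW y0).
  rewrite leNgt; apply/negP => y1; apply: (nb 1); first by rewrite !in_cons eqxx orbT.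
  have x_le_y : x <= y by lra.
  by rewrite (min_l x_le_y) (max_r x_le_y) x1 (ltW y1).
split => //.
  by apply/negP => yb; apply: (nb y yb); rewrite ge_min le_max !lexx !orbT.
apply/esym/f_const => //; first by apply/andP.
by move=> b bs; apply: nb; rewrite !in_cons bs !orbT.
Qed.

(* Hence [f] is Borel on [0,1]: the preimage of a Borel set is an open set
   plus finitely many breakpoints. *)
Lemma pc_measurable_on : measurable_fun (@unit01 R) f.
Proof.
move=> _ B mB.
set U := [set x | unit01 x /\ x \notin breaks /\ B (f x)].
have oU : open U.
  rewrite openE => x [x01 [xb Bx]]; have [d d0 Hd] := pc_locally_constant x01 xb.
  apply/nbhs_ballP; exists d => // y; rewrite -ball_normE /= => /Hd[y01 yb fy].
  by rewrite /U /= fy.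
rewrite (_ : @unit01 R `&` f @^-1` B =
    U `|` [set x | x \in breaks /\ unit01 x /\ B (f x)]).
  apply: measurableU; first exact: open_measurable.
  apply: countable_measurable; first by move=> t; exact: measurable_set1.
  apply: finite_set_countable; apply: (@sub_finite_set _ _ [set` breaks]) => //.
  by move=> x [].
apply/seteqP; split=> x /=.
  by move=> [x01 Bx]; case: (boolP (x \in breaks)) => xb; [right | left].
by case=> [[? [_ ?]] | [_ [? ?]]].
Qed.

End PiecewiseConstant.

Lemma pc_measurable (R : realType) (f : R -> R) :
  piecewise_const_pos f -> measurable_fun (@unit01 R) f.
Proof. by move=> [_ [_ [s Hs]]]; exact: pc_measurable_on Hs. Qed.

Lemma pc_ge0 (R : realType) (f : R -> R) :
  piecewise_const_pos f -> forall x, unit01 x -> 0 <= f x.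
Proof. by move=> [_ [pos _]] x /pos/ltW. Qed.

Section Lengths.
Variable R : realType.
Local Notation mu := (@lebesgue_measure R).
Local Notation I01 := (@unit01 R).

(* The real-valued length of a set; for subsets of [0,1] it loses nothing. *)
Definition len (A : set R) : R := fine (mu A).

Lemma unit01E : I01 = `[0, 1]%classic.
Proof. by apply/seteqP; split => x; rewrite /unit01 /= in_itv. Qed.

Lemma measurable_unit01 : measurable I01.
Proof. by rewrite unit01E; exact: measurable_itv. Qed.

Lemma mu_unit01 : mu I01 = 1%:E.
Proof. by rewrite unit01E lebesgue_measure_itv /= lte_fin ltr01 -EFinD subr0. Qed.

Lemma len_ge0 (A : set R) : 0 <= len A.
Proof. exact/fine_ge0/measure_ge0. Qed.

Lemma lenE (A : set R) : measurable A -> A `<=` I01 -> mu A = (len A)%:E.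
Proof.
move=> mA A01; rewrite /len fineK // ge0_fin_numE ?measure_ge0 //.
rewrite (le_lt_trans _ (ltry 1)) // -mu_unit01 le_measure ?inE //.
exact: measurable_unit01.
Qed.

Lemma len_unit01 : len I01 = 1.
Proof. by rewrite /len mu_unit01. Qed.

Lemma len_le (A B : set R) : measurable A -> measurable B -> B `<=` I01 ->
  A `<=` B -> len A <= len B.
Proof.
move=> mA mB B01 AB; have A01 := subset_trans AB B01.
by rewrite -lee_fin -!lenE // le_measure ?inE.
Qed.

Lemma len_setU (P Q : set R) : measurable P -> measurable Q ->
  P `<=` I01 -> Q `<=` I01 -> P `&` Q = set0 -> len (P `|` Q) = len P + len Q.
Proof.
move=> mP mQ P01 Q01 PQ; apply/EFin_inj; rewrite EFinD -!lenE ?measureU //.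
  exact: measurableU.
by move=> x [/P01|/Q01].
Qed.

Lemma len_disjoint_le (P Q S : set R) :
  measurable P -> measurable Q -> measurable S -> S `<=` I01 ->
  P `&` Q = set0 -> P `|` Q `<=` S -> len P + len Q <= len S.
Proof.
move=> mP mQ mS S01 PQ PQS.
have [P01 Q01] : P `<=` I01 /\ Q `<=` I01 by split=> x Px; apply/S01/PQS; [left|right].
by rewrite -len_setU // len_le //; exact: measurableU.
Qed.

Lemma len_split_le (P Q S : set R) : measurable P -> measurable Q ->
  measurable S -> S `<=` I01 -> P `&` Q = set0 ->
  len (S `&` P) + len (S `&` Q) <= len S.
Proof.
move=> mP mQ mS S01 PQ; apply: len_disjoint_le => //; try exact: measurableI.
  by rewrite setIACA PQ setI0.
by move=> x [[]|[]].
Qed.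

Lemma util_cst (f : R -> R) (k : R) (A : set R) : measurable A -> A `<=` I01 ->
  (forall x, A x -> f x = k) -> util f A = (k * len A)%:E.
Proof.
move=> mA A01 fk; rewrite /util (eq_integral (fun=> k%:E)) ?integral_cst //.
  by rewrite EFinM -lenE.
by move=> x; rewrite inE => Ax; rewrite /= fk.
Qed.

Lemma pc_dens1 : piecewise_const_pos (@dens1 R).
Proof.
split; first by move=> x; rewrite /dens1 /unit01 /=; case: ifP.
split; first by move=> x; rewrite /dens1 /unit01 /= => ->.
by exists [::] => x y; rewrite /dens1 /unit01 /= => -> ->.
Qed.

Lemma util_dens1 (A : set R) : measurable A -> A `<=` I01 ->
  util (@dens1 R) A = (len A)%:E.
Proof.
move=> mA A01; rewrite (util_cst mA A01 (k:=1)) ?mul1r // => x /A01.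
by rewrite /dens1 /unit01 /= => ->.
Qed.

End Lengths.

Arguments measurable_unit01 {R}.
Arguments len_unit01 {R}.
Arguments pc_dens1 {R}.

Section HalfSplit.
Variable R : realType.
Local Notation mu := (@lebesgue_measure R).
Local Notation I01 := (@unit01 R).

Variables X1 X2 : set R.
Hypothesis alloc_X : allocation (X1, X2).
Hypothesis len_X1 : len X1 = 2^-1.
Hypothesis len_X2 : len X2 = 2^-1.

Let gap : set R := I01 `\` (X1 `|` X2).

Let measurable_gap : measurable gap.
Proof.
have [mX1 [mX2 _]] := alloc_X.
by apply: measurableD; [exact: measurable_unit01 | exact: measurableU].
Qed.

Lemma gap_null : mu gap = 0%E.
Proof.
have [mX1 [mX2 [X1u [X2u X12]]]] := alloc_X.
have mU : measurable (X1 `|` X2) by exact: measurableU.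
have U01 : X1 `|` X2 `<=` I01 by move=> x [/X1u|/X2u].
have gapU : gap `|` (X1 `|` X2) = I01 by rewrite setUC setDUK.
have gapX : gap `&` (X1 `|` X2) = set0 by rewrite setIC setDIK.
have gap01 : gap `<=` I01 by move=> x [].
have := len_setU measurable_gap mU gap01 U01 gapX.
rewrite gapU len_unit01 len_setU // len_X1 len_X2 => len_gap.
by rewrite lenE //; first congr EFin; lra.
Qed.

Lemma util_two_valued (f : R -> R) (k1 k2 : R) :
  measurable_fun I01 f -> (forall x, I01 x -> 0 <= f x) ->
  (forall x, X1 x -> f x = k1) -> (forall x, X2 x -> f x = k2) ->
  forall A, measurable A -> A `<=` I01 ->
  util f A = (k1 * len (A `&` X1) + k2 * len (A `&` X2))%:E.
Proof.
move=> mf f0 fk1 fk2 A mA A01.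
have [mX1 [mX2 [_ [_ X12]]]] := alloc_X.
have mfA : measurable_fun A (EFin \o f).
  apply/measurable_EFinP; apply: measurable_funS mf => //; exact: measurable_unit01.
have f0A : forall x, A x -> (0 <= (EFin \o f) x)%E.
  by move=> x /A01 /f0; rewrite lee_fin.
have AgapE : A `\` gap = (A `&` X1) `|` (A `&` X2).
  rewrite -setIUr; apply/seteqP; split=> x /=.
    by move=> [Ax]; rewrite /gap /= => /not_andP[/(_ (A01 x Ax))|/contrapT].
  by move=> [Ax X12x]; split => // -[].
have [mAX1 mAX2] : measurable (A `&` X1) /\ measurable (A `&` X2).
  by split; exact: measurableI.
rewrite /util (@ge0_negligible_integral _ _ _ mu A gap) //; last exact: gap_null.
rewrite AgapE ge0_integral_setU //; first last.
- by apply/disj_set2P; rewrite setIACA X12 setI0.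
- by move=> x; rewrite -AgapE => -[/f0A].
- by apply: measurable_funS mfA => //; rewrite -AgapE => x [].
change (util f (A `&` X1) + util f (A `&` X2) =
  (k1 * len (A `&` X1) + k2 * len (A `&` X2))%:E)%E.
have AX01 : forall X, A `&` X `<=` I01 by move=> X x [/A01].
rewrite (util_cst mAX1 (AX01 X1) (k:=k1)) ?(util_cst mAX2 (AX01 X2) (k:=k2)) //.
- by move=> x [_ /fk2].
- by move=> x [_ /fk1].
Qed.

End HalfSplit.

(* The key step is
   [0 <= (1/2 - eps) (a - 1/4)], which forces [a >= 1/4] since [eps < 1/2]. *)
Lemma quarter_shares (R : realFieldType) (eps a b c d : R) :
  0 < eps -> eps < 2^-1 -> 0 <= c ->
  a + b <= 2^-1 -> a + c <= 2^-1 -> b + d <= 2^-1 ->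
  3 / 8 <= a / 2 + b -> (1 + eps) / 4 <= eps * c + d ->
  [/\ a = 4^-1, b = 4^-1, c = 4^-1 & d = 4^-1].
Proof.
move=> eps0 eps_half c0 ab ac bd prop1 prop2.
have a_le : a <= 4^-1 by lra.
have a_ge : 4^-1 <= a.
  have : eps * c <= eps * (2^-1 - a) by rewrite ler_pM2l //; lra.
  have : 0 <= (2^-1 - eps) * (a - 4^-1) by nra.
  by rewrite pmulr_rge0 ?subr_gt0 // subr_ge0.
have c_ge : 4^-1 <= c by rewrite -(ler_pM2l eps0); lra.
have : eps * c <= eps * 4^-1 by rewrite ler_pM2l //; lra.
split; lra.
Qed.

Section Mechanism.
Variable R : realType.

Variable M : (R -> R) -> (R -> R) -> set R * set R.
Hypothesis HM : mechanism M.
Hypothesis Hprop : proportional M.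
Hypothesis Htruth : truthful M.
Variables X1 X2 : set R.
Hypothesis HX1 : X1 = (M (@dens1 R) (@dens1 R)).1.
Hypothesis HX2 : X2 = (M (@dens1 R) (@dens1 R)).2.

Lemma uniform_alloc : allocation (X1, X2).
Proof. by rewrite HX1 HX2; exact: HM pc_dens1 pc_dens1. Qed.

Lemma uniform_halves : len X1 = 2^-1 /\ len X2 = 2^-1.
Proof.
have [mX1 [mX2 [X1u [X2u X12]]]] := uniform_alloc.
have [prop1 prop2] := Hprop pc_dens1 pc_dens1; rewrite -HX1 -HX2 in prop1 prop2.
rewrite !util_dens1 ?len_unit01 -?EFinM ?lee_fin ?mulr1 // in prop1 prop2;
  try exact: measurable_unit01.
have X01 : X1 `|` X2 `<=` @unit01 R by move=> x [/X1u|/X2u].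
have := len_disjoint_le mX1 mX2 measurable_unit01 (@subset_refl _ _) X12 X01.
by rewrite len_unit01; lra.
Qed.

(* Truthfulness bounds agent 1's share by one half whenever agent 2's density
   is [k <= 1] on [X1] and [1] on [X2]: compare with the profile in which
   agent 1 reports the uniform density.  There agent 1 gets at least as much
   length (truthfulness for agent 1), while agent 2, who could have reported
   the uniform density and received [X2], gets length at least one half
   (truthfulness for agent 2). *)
Lemma first_share_le_half (f1 f2 : R -> R) (k : R) :
  piecewise_const_pos f1 -> piecewise_const_pos f2 ->
  (forall x, X1 x -> f2 x = k) -> (forall x, X2 x -> f2 x = 1) -> k <= 1 ->
  len (M f1 f2).1 <= 2^-1.
Proof.
move=> Hf1 Hf2 f2X1 f2X2 k1.
have pd : piecewise_const_pos (@dens1 R) := pc_dens1.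
have [hX1 hX2] := uniform_halves.
have [mX1 [mX2 [X1u [X2u X12]]]] := uniform_alloc.
have [mA1 [_ [A1u _]]] := HM Hf1 Hf2.
have [mG1 [mG2 [G1u [G2u G12]]]] := HM pd Hf2.
set G2 := (M (@dens1 R) f2).2 in mG2 G2u G12 *.
have [truth1 truth2] := Htruth.
have lie1 := truth1 _ _ _ pd Hf2 Hf1.
rewrite !util_dens1 // lee_fin in lie1.
have lie2 := truth2 _ _ _ pd Hf2 pd; rewrite -HX2 in lie2.
rewrite (util_cst mX2 X2u f2X2) (util_two_valued uniform_alloc hX1 hX2
  (pc_measurable Hf2) (pc_ge0 Hf2) f2X1 f2X2 mG2 G2u) lee_fin mul1r hX2 in lie2.
have k_le : k * len (G2 `&` X1) <= len (G2 `&` X1).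
  by rewrite -[leRHS]mul1r ler_wpM2r ?len_ge0.
have := len_split_le mX1 mX2 mG2 G2u X12.
have G01 : (M (@dens1 R) f2).1 `|` G2 `<=` @unit01 R by move=> x [/G1u|/G2u].
have := len_disjoint_le mG1 mG2 measurable_unit01 (@subset_refl _ _) G12 G01.
by rewrite len_unit01; lra.
Qed.

End Mechanism.

Theorem proposition3 (R : realType)
  (M : (R -> R) -> (R -> R) -> set R * set R)
  (HM : mechanism M) (Hprop : proportional M) (Htruth : truthful M)
  (X1 X2 : set R)
  (HX1 : X1 = (M (@dens1 R) (@dens1 R)).1)
  (HX2 : X2 = (M (@dens1 R) (@dens1 R)).2)
  (HX1fin : fin_union_intervals X1) (HX2fin : fin_union_intervals X2)
  (eps : R) (Heps0 : 0 < eps) (Heps1 : eps < 2^-1)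
  (f13 f23 : R -> R)
  (Hf13 : piecewise_const_pos f13) (Hf23 : piecewise_const_pos f23)
  (Hf13X1 : forall x, X1 x -> f13 x = 2^-1) (Hf13X2 : forall x, X2 x -> f13 x = 1)
  (Hf23X1 : forall x, X1 x -> f23 x = eps) (Hf23X2 : forall x, X2 x -> f23 x = 1) :
  @lebesgue_measure R ((M f13 f23).1 `&` X1) = (4^-1)%:E /\
  @lebesgue_measure R ((M f13 f23).1 `&` X2) = (4^-1)%:E /\
  @lebesgue_measure R ((M f13 f23).2 `&` X1) = (4^-1)%:E /\
  @lebesgue_measure R ((M f13 f23).2 `&` X2) = (4^-1)%:E.
Proof.
have allocX := uniform_alloc HM HX1 HX2.
have [hX1 hX2] := uniform_halves HM Hprop HX1 HX2.
have [mX1 [mX2 [X1u [X2u X12]]]] := allocX; rewrite /= in mX1 mX2 X1u X2u X12.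
have [mA1 [mA2 [A1u [A2u A12]]]] := HM _ _ Hf13 Hf23.
set A1 := (M f13 f23).1 in mA1 A1u A12 *; set A2 := (M f13 f23).2 in mA2 A2u A12 *.
have A1_half : len A1 <= 2^-1.
  by apply: (first_share_le_half HM Hprop Htruth HX1 HX2 Hf13 Hf23 Hf23X1 Hf23X2); lra.
have := len_split_le mX1 mX2 mA1 A1u X12.
have := len_split_le mA1 mA2 mX1 X1u A12; rewrite !(setIC X1) hX1.
have := len_split_le mA1 mA2 mX2 X2u A12; rewrite !(setIC X2) hX2.
have u13 := util_two_valued allocX hX1 hX2
  (pc_measurable Hf13) (pc_ge0 Hf13) Hf13X1 Hf13X2.
have u23 := util_two_valued allocX hX1 hX2
  (pc_measurable Hf23) (pc_ge0 Hf23) Hf23X1 Hf23X2.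
have [prop1 prop2] := Hprop _ _ Hf13 Hf23.
rewrite (u13 _ measurable_unit01 (@subset_refl _ _)) (u13 _ mA1 A1u)
  (setIidr X1u) (setIidr X2u) hX1 hX2 -EFinM lee_fin in prop1.
rewrite (u23 _ measurable_unit01 (@subset_refl _ _)) (u23 _ mA2 A2u)
  (setIidr X1u) (setIidr X2u) hX1 hX2 -EFinM lee_fin in prop2.
move=> b_d a_c a_b.
have [qa qb qc qd] : [/\ len (A1 `&` X1) = 4^-1, len (A1 `&` X2) = 4^-1,
    len (A2 `&` X1) = 4^-1 & len (A2 `&` X2) = 4^-1].
  by apply: (quarter_shares Heps0 Heps1 (len_ge0 _)); lra.
rewrite !lenE ?qa ?qb ?qc ?qd //.
all: first [exact: measurableI | by move=> x [/A1u] | by move=> x [/A2u]].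
Qed.
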